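(* Let $X$ be a locally compact space and $\kappa$ an infinite cardinal. Then $\mathcal{K}(X)$ has calibre $(\kappa^+,\omega)$ if and only if $e(\mathcal{K}(X))\le\kappa$.
   Context: All spaces are Tychonoff. $\mathcal{K}(X)$ is the set of compact subsets of $X$ ordered by inclusion and equipped with the Vietoris topology. A directed set $P$ has calibre $(\mu,\lambda)$ if every subset of $P$ of size $\mu$ contains a subset of size $\lambda$ with an upper bound in $P$. The extent $e(Y)$ is the supremum of cardinalities of closed discrete subsets of $Y$. *)

From HB Require Import structures.
From mathcomp Require Import all_boot all_order.
From mathcomp Require Import all_classical all_reals all_analysis.
Set Implicit Arguments. Unset Strict Implicit. Unset Printing Implicit Defensive.
Local Open Scope classical_set_scope.

Definition hyperK (X : topologicalType) : Type := {K : set X | compact K}.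

HB.instance Definition _ (X : topologicalType) := gen_eqMixin (hyperK X).
HB.instance Definition _ (X : topologicalType) := gen_choiceMixin (hyperK X).

(* Index of the Vietoris subbase: (false, U) ~ {K | K ⊆ U},
   (true, U) ~ {K | K ∩ U ≠ ∅}, for U open in X. *)
Definition vietoris_index (X : topologicalType) : Type := (bool * set X)%type.
HB.instance Definition _ (X : topologicalType) :=
  isPointed.Build (vietoris_index X) (false, setT).

Definition vietoris_dom (X : topologicalType) : set (vietoris_index X) :=
  [set i | open i.2].

Definition vietoris_sub (X : topologicalType) (i : vietoris_index X)
  : set (hyperK X) :=
  if i.1 then [set K | proj1_sig K `&` i.2 !=set0]
  else [set K | proj1_sig K `<=` i.2].

HB.instance Definition _ (X : topologicalType) :=
  @isSubBaseTopological.Build (hyperK X) (vietoris_index X)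
    (@vietoris_dom X) (@vietoris_sub X).

Definition hyperK_le (X : topologicalType) (A B : hyperK X) : Prop :=
  proj1_sig A `<=` proj1_sig B.

(* Calibre (mu, lambda) of a (directed) set T with order le, where the
   cardinalities mu and lambda are given as predicates "S has size mu". *)
Definition calibre (T : Type) (le : T -> T -> Prop)
  (size_mu size_lambda : set T -> Prop) : Prop :=
  forall S : set T, size_mu S ->
    exists S' : set T, [/\ S' `<=` S, size_lambda S' &
      exists u : T, forall x, S' x -> le x u].

(* |S| = kappa^+, where kappa = |[set: K]| : S has size > kappa and every
   subset of S of size > kappa is equinumerous with S. *)
Definition has_size_succ (K : Type) (T : Type) (S : set T) : Prop :=
  ~ (S #<= [set: K])%card /\
  forall B : set T, B `<=` S -> ~ (B #<= [set: K])%card -> (B #= S)%card.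

Definition has_size_omega (T : Type) (S : set T) : Prop :=
  (S #= [set: nat])%card.

Definition closed_discrete (Y : topologicalType) (D : set Y) : Prop :=
  closed D /\
  forall y, D y -> exists U : set Y, [/\ open U, U y & U `&` D = [set y]].

Definition extent_le (Y : topologicalType) (K : Type) : Prop :=
  forall D : set Y, closed_discrete D -> (D #<= [set: K])%card.

From mathcomp Require Import all_boot all_order.
From mathcomp Require Import all_classical all_reals all_analysis.
From mathcomp Require Import wochoice.
Local Open Scope classical_set_scope.
Set Implicit Arguments. Unset Strict Implicit. Unset Printing Implicit Defensive.

(* For compact l, the compact sets contained in l form a compact subset of
   K(X): an ultrafilter on it converges to l meet its upper Kuratowski limit.
   A closed discrete set meets a compact set in finitely many points, so an
   upper-bounded family inside a closed discrete subset of K(X) is finite;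
   hence a closed discrete set of size kappa^+ (which exists inside any closed
   discrete set of size > kappa, by well-ordering) contradicts calibre
   (kappa^+, omega).  Conversely, if S has size kappa^+ and no infinite
   bounded subfamily, local compactness gives every K a neighbourhood
   {L | L <= V}, V open inside a compact set, meeting S in finitely many
   elements; a locally finite subset of the T1 space K(X) is closed discrete,
   so |S| <= e(K(X)) <= kappa, a contradiction. *)

Section WellOrder.
Variables (T : eqType) (R : rel T).
Hypothesis woR : well_order R.

Lemma well_order_min (P : set T) :
  P !=set0 -> exists2 z, P z & forall x, P x -> R z x.
Proof.
move=> [x Px]; have [|z [[zP zlb] _]] := @woR [pred y | `[< P y >]].
  by exists x; apply/asboolP.
exists z; first exact/asboolP.
by move=> y Py; apply/zlb/asboolP.
Qed.

Lemma well_order_total : total R.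
Proof. by move=> x y; apply: (wo_chainW (withinW (A := predT) (@woR))). Qed.

Lemma well_order_anti : antisymmetric R.
Proof.
by move=> x y; apply: (wo_chain_antisymmetric (withinW (A := predT) (@woR))).
Qed.

Definition strict_rel : rel T := fun x y => R x y && (x != y).

Lemma well_order_wf : well_founded strict_rel.
Proof.
move=> x; apply: contrapT => nAx.
have [z nAz zlb] :=
  well_order_min (P := [set w | ~ Acc strict_rel w]) (ex_intro _ x nAx).
apply: nAz; constructor => y /andP[Ryz /eqP yz]; apply: contrapT => nAy.
by apply: yz; apply: well_order_anti; rewrite Ryz zlb.
Qed.

End WellOrder.

Section SuccessorCardinal.
Variables (Kappa : Type) (T : choiceType).

Let R : rel T := sval (well_ordering_principle T).
Let woR : well_order R := svalP (well_ordering_principle T).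

Let segment (A : set T) (b : T) := [set c | A c /\ strict_rel R c b].

Lemma card_le_of_small_segments (B B' : set T) :
  (forall b, B b -> (segment B b #<= [set: Kappa])%card) ->
  B' `<=` B -> ~ (B' #<= [set: Kappa])%card -> (B #<= B')%card.
Proof.
move=> small_seg B'B nB'.
(* f b is a point of B' missed by f on the segment below b; it exists since
   that image has size <= kappa while B' does not. *)
pose F b (rec : forall c, strict_rel R c b -> T) := xget b
  [set y | B' y /\ ~ exists c (h : strict_rel R c b), B c /\ rec c h = y].
pose f := Fix (well_order_wf woR) (fun=> T) F.
have fE b : f b = xget b
    [set y | B' y /\ ~ exists c (h : strict_rel R c b), B c /\ f c = y].
  rewrite /f Fix_eq // => x g1 g2 eq_g.
  suff -> : g1 = g2 by [].
  by apply: functional_extensionality_dep => y; apply: functional_extensionality_dep.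
have fP b : B b -> B' (f b) /\ forall c, B c -> strict_rel R c b -> f c <> f b.
  move=> Bb; rewrite fE; set P := [set y | _].
  have [] : P (xget b P).
    apply: xgetPex; apply: contrapT => B'_covered; apply: nB'.
    apply: card_le_trans (small_seg b Bb).
    apply: card_le_trans (card_image_le f _); apply: subset_card_le => y B'y.
    apply: contrapT => nim; apply: B'_covered; exists y; split => // -[c [h [Bc fcy]]].
    by apply: nim; exists c.
  by move=> B'x nex; split => // c Bc h fc; apply: nex; exists c, h.
suff : $|{injfun B >-> B'}| by case=> g; exact: inj_card_le g.
apply/injfunPex; exists f; first by move=> b /fP[].
move=> b1 b2; rewrite !in_setE => Bb1 Bb2 fb12; apply: contrapT => /eqP b12.
have [R12|R21] := orP (well_order_total woR b1 b2).
- have [_ /(_ b1 Bb1)] := fP b2 Bb2; apply => //.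
  by rewrite /strict_rel R12.
- have [_ /(_ b2 Bb2)] := fP b1 Bb1; apply => //.
  by rewrite /strict_rel R21 eq_sym.
Qed.

Lemma has_size_succ_sub (D : set T) : ~ (D #<= [set: Kappa])%card ->
  exists2 B, B `<=` D & has_size_succ Kappa B.
Proof.
move=> nD; pose B := [set d | D d /\ (segment D d #<= [set: Kappa])%card].
have small_seg b : B b -> (segment B b #<= [set: Kappa])%card.
  by move=> [_ /(card_le_trans _)]; apply; apply: subset_card_le => c [[]].
have nB : ~ (B #<= [set: Kappa])%card.
  move=> smallB.
  pose big := [set d | D d /\ ~ (segment D d #<= [set: Kappa])%card].
  have [big_ne|nP] := pselect (big !=set0).
  - have [y [Dy ny] ylb] := well_order_min woR big_ne.
    apply/ny/(card_le_trans _ smallB)/subset_card_le => c [Dc /andP[Rcy /eqP cy]].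
    split=> //; apply: contrapT => nc; apply: cy; apply: (well_order_anti woR).
    by rewrite Rcy ylb.
  - apply/nD/(card_le_trans _ smallB)/subset_card_le => d Dd; split=> //.
    by apply: contrapT => nd; apply: nP; exists d.
exists B => [d []//|]; split=> // B' B'B nB'.
apply: Cantor_Bernstein; first exact: subset_card_le.
exact: card_le_of_small_segments small_seg B'B nB'.
Qed.

End SuccessorCardinal.

Lemma infinite_set_has_size_omega (T : Type) (A : set T) :
  infinite_set A -> exists2 B, B `<=` A & has_size_omega B.
Proof. by move=> /infiniteP /card_subP[B BN BA]; exists B. Qed.

Lemma has_size_omega_infinite (T : Type) (A : set T) :
  has_size_omega A -> infinite_set A.
Proof. by move=> /card_eqPle[_ ?]; apply/infiniteP. Qed.

(* A finite-subcover argument that, unlike compact_cover, needs no point. *)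
Lemma compact_setU_closed_cover (X : topologicalType) (P : set_system X)
    (K : set X) :
  compact K -> P set0 -> setU_closed P ->
  (forall x, K x -> exists2 U, P U & nbhs x U) -> exists2 U, P U & K `<=` U.
Proof.
move=> /compact_near_coveringP cK P0 PU Kloc.
pose F := filter_from P (fun U0 => [set U | P U /\ U0 `<=` U]).
have FF : Filter F.
  apply: filter_from_filter; first by exists set0.
  move=> U V PU' PV; exists (U `|` V); first exact: PU.
  by move=> W [PW UVW]; split; split => // x ?; apply: UVW; [left|right].
have [U0 PU0 /(_ U0 (conj PU0 (@subset_refl _ _)))] :
    F [set U | K `<=` (fun x => P U /\ U x)].
  apply: (cK _ F _ FF) => x /Kloc [U PU' nU].
  exists (U, [set W | P W /\ U `<=` W]); first by split => //; exists U.
  by case=> y W [/= Uy [PW UW]]; split => //; apply: UW.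
by move=> KU; exists U0 => // x /KU[].
Qed.

Lemma locally_compact_compact_nbhs (X : topologicalType) (K : set X) :
  locally_compact [set: X] -> compact K ->
  exists V C, [/\ open V, K `<=` V, V `<=` C & compact C].
Proof.
move=> lcX cK.
pose P := [set V : set X | open V /\ exists2 C, compact C & V `<=` C].
have [|U V [oU [CU cCU UCU]] [oV [CV cCV VCV]]|x _|V [oV [C cC VC]] KV] :=
    compact_setU_closed_cover (P := P) cK.
- by split; [exact: open0 | exists set0; [exact: compact0 | ]].
- split; first exact: openU.
  by exists (CU `|` CV); [exact: compactU | exact: setUSS].
- have [U + [cU _]] := lcX x I; rewrite withinET => xU.
  exists (interior U); last exact: nbhs_interior.
  by split; [exact: open_interior | exists U => //; exact: interior_subset].
- by exists V, C.
Qed.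

Lemma closed_discrete_compact_finite (Y : topologicalType) (D C : set Y) :
  closed_discrete D -> compact C -> finite_set (C `&` D).
Proof.
move=> [clD isoD] cC.
have [||x [_ Dx]|U finUD CDU] := compact_setU_closed_cover
  (P := [set U | finite_set (U `&` D)]) (compact_closedI cC clD).
- by rewrite /= set0I; exact: finite_set0.
- by move=> U V fU fV /=; rewrite setIUl finite_setU.
- have [U [oU Ux UD]] := isoD x Dx.
  by exists U; [rewrite /= UD; exact: finite_set1 | exact: open_nbhs_nbhs].
- by apply: sub_finite_set finUD => y [Cy Dy]; split => //; exact: CDU.
Qed.

Lemma locally_finite_closed_discrete (Y : topologicalType) (S : set Y) :
  accessible_space Y ->
  (forall y, exists N, [/\ open N, N y & finite_set (N `&` S)]) ->
  closed_discrete S.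
Proof.
move=> T1 locfin.
have isolating y : exists2 U, open U /\ U y & U `&` S `<=` [set y].
  have [N [oN Ny finNS]] := locfin y.
  exists (N `\` ((N `&` S) `\` [set y])); last first.
    by move=> z [[Nz nz] Sz]; apply: contrapT => zy; apply: nz.
  split; last by split => // -[_]; apply.
  apply/openI/closed_openC => //; apply: (accessible_finite_set_closed.1 T1).
  exact: finite_setD.
split.
- move=> y clSy; have [U [oU Uy] US] := isolating y.
  have [z [Sz Uz]] := clSy U (open_nbhs_nbhs (conj oU Uy)).
  by rewrite -(US z (conj Uz Sz)).
- move=> y Sy; have [U [oU Uy] US] := isolating y; exists U; split => //.
  by apply/seteqP; split => [//|z ->].
Qed.

Section Vietoris.
Variable X : topologicalType.

Lemma open_vietoris_sub (i : vietoris_index X) :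
  open i.2 -> open (vietoris_sub i).
Proof.
move=> oi; exists [set vietoris_sub i]; last exact: bigcup_set1.
by move=> _ ->; apply: finI_from1.
Qed.

Lemma vietoris_cvg (G : set_system (hyperK X)) (K : hyperK X) : Filter G ->
  (forall i, open i.2 -> vietoris_sub i K -> G (vietoris_sub i)) -> G --> K.
Proof.
move=> FG GK N; rewrite nbhsE; case=> O [[S SF <-] [B SB BK]] SN.
suff GB : G B by apply: filterS GB => L BL; apply: SN; exists B.
have [F FD FB] := SF B SB; rewrite -FB in BK *.
apply: filter_bigI => i Fi; apply: GK; last exact: BK.
by have := FD i Fi; rewrite in_setE.
Qed.

Lemma hyperK_accessible : hausdorff_space X -> accessible_space (hyperK X).
Proof.
move=> hX [k ck] [l cl] /eqP kl.
have [[x [kx nlx]]|kSl] := pselect (k `\` l !=set0).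
  exists (vietoris_sub (true, ~` l)); split; rewrite ?in_setE.
  - by apply/open_vietoris_sub/closed_openC; exact: compact_closed.
  - by exists x.
  - by case=> y [].
have [x [lx nkx]] : l `\` k !=set0.
  apply: contrapT => lSk; apply/kl/eq_exist/seteqP; split=> y.
    by move=> ky; apply: contrapT => nly; apply: kSl; exists y.
  by move=> ly; apply: contrapT => nky; apply: lSk; exists y.
exists (vietoris_sub (false, ~` [set x])); split; rewrite ?in_setE.
- apply/open_vietoris_sub/closed_openC.
  exact: accessible_closed_set1 (hausdorff_accessible hX) x.
- by move=> y ky yx; apply: nkx; rewrite -yx.
- by move=> /(_ x lx); apply.
Qed.

Definition hyper_limsup (G : set_system (hyperK X)) : set X :=
  [set x | forall U, nbhs x U -> G [set K | proj1_sig K `&` U !=set0]].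

Lemma closed_hyper_limsup (G : set_system (hyperK X)) : Filter G ->
  closed (hyper_limsup G).
Proof.
move=> FG x clx U; rewrite nbhsE; case=> W [oW Wx] WU.
have [z [Zz Wz]] := clx W (open_nbhs_nbhs (conj oW Wx)).
apply: filterS (Zz W (open_nbhs_nbhs (conj oW Wz))).
by move=> K [y [Ky Wy]]; exists y; split => //; apply: WU.
Qed.

Lemma ultra_hyper_limsup_sub (G : set_system (hyperK X)) (l U : set X) :
  UltraFilter G -> compact l -> G [set K | proj1_sig K `<=` l] -> open U ->
  l `&` hyper_limsup G `<=` U -> G [set K | proj1_sig K `<=` U].
Proof.
move=> UG cl Gl oU limU; have PG := @ultra_proper _ _ UG.
have [//|GnU] := in_ultra_setVsetC [set K : hyperK X | proj1_sig K `<=` U] UG.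
have escapes (K : hyperK X) : ~ proj1_sig K `<=` U -> proj1_sig K `\` U !=set0.
  move=> nKU; apply: contrapT => nex; apply: nKU => x Kx.
  by apply: contrapT => nUx; apply: nex; exists x.
have [K1 /escapes [x0 _]] := filter_ex GnU.
pose f (K : hyperK X) := xget x0 (proj1_sig K `\` U).
have fP (K : hyperK X) : ~ proj1_sig K `<=` U -> (proj1_sig K `\` U) (f K).
  by move=> /escapes; exact: xgetPex.
have [y [[ly nUy] cly]] : (l `\` U) `&` cluster (f @ G) !=set0.
  apply: (compact_closedI cl (open_closedC oU)).
  suff : G (f @^-1` (l `\` U)) by [].
  apply: filterS (filterI Gl GnU) => K [Kl /fP [KfK nUfK]].
  by split => //; exact: Kl.
have [V nV nGV] : exists2 V, nbhs y V & ~ G [set K | proj1_sig K `&` V !=set0].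
  apply: contrapT => nex; apply/nUy/limU; split => // V nV.
  by apply: contrapT => nG; apply: nex; exists V.
have [//|GnV] := in_ultra_setVsetC [set K | proj1_sig K `&` V !=set0] UG.
have GfnV : G (f @^-1` ~` V).
  apply: filterS (filterI GnU GnV) => K [/fP [KfK _] nmeet] VfK.
  by apply: nmeet; exists (f K).
by have [z []] := cly _ _ GfnV nV.
Qed.

Lemma compact_hyperK_sub (l : set X) :
  compact l -> compact [set K : hyperK X | proj1_sig K `<=` l].
Proof.
move=> cl; rewrite compact_ultra => G UG Gl; have PG := @ultra_proper _ _ UG.
pose K0 : hyperK X := exist _ (l `&` hyper_limsup G)
  (compact_closedI cl (closed_hyper_limsup (@filter_filter _ _ PG))).
exists K0; split; first by move=> x [].
apply: vietoris_cvg => -[[] U] /= oU; rewrite /vietoris_sub /=.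
  by move=> [x [[_ Zx] Ux]]; exact: Zx U (open_nbhs_nbhs (conj oU Ux)).
exact: ultra_hyper_limsup_sub.
Qed.

End Vietoris.

Lemma calibre_extent_le (X : topologicalType) (Kappa : Type) :
  calibre (@hyperK_le X) (@has_size_succ Kappa _) (@has_size_omega _) ->
  extent_le (hyperK X) Kappa.
Proof.
move=> cal D Ddisc; apply: contrapT => nD.
have [B BD Bsucc] := has_size_succ_sub nD.
have [S [SB /has_size_omega_infinite infS [[l cl] Sl]]] := cal B Bsucc.
apply/infS/(sub_finite_set _ (closed_discrete_compact_finite Ddisc
  (compact_hyperK_sub cl))).
by move=> K SK; split; [exact: Sl | exact/BD/SB].
Qed.

Lemma extent_le_calibre (X : topologicalType) (Kappa : Type) :
  hausdorff_space X -> locally_compact [set: X] ->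
  extent_le (hyperK X) Kappa ->
  calibre (@hyperK_le X) (@has_size_succ Kappa _) (@has_size_omega _).
Proof.
move=> hX lcX ext S [nS _]; apply: contrapT => ncal; apply/nS/ext.
apply: locally_finite_closed_discrete (hyperK_accessible hX) _ => -[k ck].
have [V [C [oV kV VC cC]]] := locally_compact_compact_nbhs lcX ck.
exists (vietoris_sub (false, V)); split; [exact: open_vietoris_sub | exact: kV |].
apply: contrapT => /infinite_set_has_size_omega [S' S'NS omS']; apply: ncal.
exists S'; split => //; first by move=> K /S'NS[].
by exists (exist _ C cC) => K /S'NS [KV _]; exact: subset_trans VC.
Qed.

Theorem mainTheorem6 (X : topologicalType) (Kappa : Type) :
  hausdorff_space X -> locally_compact [set: X] ->
  infinite_set [set: Kappa] ->
  calibre (@hyperK_le X) (@has_size_succ Kappa _) (@has_size_omega _)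
  <-> extent_le (hyperK X) Kappa.
Proof.
move=> hX lcX _; split; [exact: calibre_extent_le | exact: extent_le_calibre].
Qed.
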